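(* Let $I$ be a conditional indicator w.r.t. $\mathcal{H}$ whose domain $\mathbb{D}_I$ is $\mathcal{H}$-decomposable. The following are equivalent: (1) $I$ is regular; (2) $I(X1_H)=I(X)1_H$ for all $X\in\mathbb{D}_I$ and $H\in\mathcal{H}$; (3) $I(X1_H+Y1_{\Omega\setminus H})=I(X)1_H+I(Y)1_{\Omega\setminus H}$ for all $X,Y\in\mathbb{D}_I$ and $H\in\mathcal{H}$.
   Context: Let $(\Omega,\mathcal{F},\mathbb{P})$ be a probability space with $\mathcal{F}$ complete, and $\mathcal{H}\subseteq\mathcal{F}$ a complete sub-$\sigma$-algebra. $\overline{\mathbb{R}}=\mathbb{R}\cup\{\pm\infty\}$ with conventions $r\pm\infty=\pm\infty$, $\infty-\infty=0$, $\infty+\infty=\infty$, $0\times(\pm\infty)=0$; $\mathbb{L}^0(G,\mathcal{G})$ is the set of $\mathcal{G}$-measurable random variables a.s. valued in $G$. $\operatorname{ess\,sup}_{\mathcal{H}}(X)$ is the smallest $\mathcal{H}$-measurable random variable dominating $X$ a.s., $\operatorname{ess\,inf}_{\mathcal{H}}(X)=-\operatorname{ess\,sup}_{\mathcal{H}}(-X)$. A conditional indicator w.r.t. $\mathcal{H}$ is a map $I:\mathbb{D}_I\to\mathbb{L}^0(\overline{\mathbb{R}},\mathcal{H})$, $0\in\mathbb{D}_I\subseteq\mathbb{L}^0(\overline{\mathbb{R}},\mathcal{F})$, with $I(X)\in[\operatorname{ess\,inf}_{\mathcal{H}}(X),\operatorname{ess\,sup}_{\mathcal{H}}(X)]$ a.s.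 and $\mathbb{D}_I+\mathbb{L}^0(\overline{\mathbb{R}},\mathcal{H})\subseteq\mathbb{D}_I$. $\mathbb{D}_I$ is $\mathcal{H}$-decomposable if $X1_H+Y1_{\Omega\setminus H}\in\mathbb{D}_I$ for $X,Y\in\mathbb{D}_I$, $H\in\mathcal{H}$. $I$ is regular if $\mathbb{D}_I$ is $\mathcal{H}$-decomposable and for $X,Y\in\mathbb{D}_I$, $H\in\mathcal{H}$, $X1_H=Y1_H$ implies $I(X)1_H=I(Y)1_H$. *)

From HB Require Import structures.
From mathcomp Require Import all_boot all_order all_algebra.
From mathcomp Require Import all_classical all_reals all_analysis measurable_realfun.
Unset Printing Implicit Defensive.
Import Order.TTheory GRing.Theory Num.Theory.
Local Open Scope classical_set_scope.
Local Open Scope ring_scope.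

Section CondIndicator.
Context {d : measure_display} {T : measurableType d} {R : realType}.
Variable P : probability T R.
Local Open Scope ereal_scope.

(* Addition on the extended reals with the paper's conventions:
   r +- oo = +-oo, oo - oo = 0, oo + oo = oo. *)
Definition eaddp (x y : \bar R) : \bar R :=
  match x, y with
  | +oo, -oo => 0
  | -oo, +oo => 0
  | _, _ => x + y
  end.

Definition P_complete := forall N : set T, P.-negligible N -> measurable N.

Definition complete_sub_sigma (Hs : set (set T)) :=
  [/\ sigma_algebra setT Hs, Hs `<=` measurable &
      forall N : set T, P.-negligible N -> Hs N].

Definition Hmeas (Hs : set (set T)) (X : T -> \bar R) :=
  forall B : set (\bar R), measurable B -> Hs (X @^-1` B).

Definition aeeq (X Y : T -> \bar R) := {ae P, forall w, X w = Y w}.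
Definition aele (X Y : T -> \bar R) := {ae P, forall w, X w <= Y w}.

Definition is_cesssup (Hs : set (set T)) (X S : T -> \bar R) :=
  [/\ Hmeas Hs S, aele X S &
      forall Z, Hmeas Hs Z -> aele X Z -> aele S Z].

Definition is_cessinf (Hs : set (set T)) (X S : T -> \bar R) :=
  is_cesssup Hs (fun w => - X w) (fun w => - S w).

Definition indm (X : T -> \bar R) (H : set T) : T -> \bar R :=
  fun w => X w * (\1_H w : R)%:E.

Definition hpatch (X Y : T -> \bar R) (H : set T) : T -> \bar R :=
  fun w => eaddp (X w * (\1_H w : R)%:E) (Y w * (\1_(~` H) w : R)%:E).

(* Random variables are modelled as functions; since L^0 consists of
   a.s.-classes, D is required to be saturated for a.s. equality and I to
   be compatible with a.s. equality. *)
Definition cond_indicator (Hs : set (set T)) (D : set (T -> \bar R))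
    (I : (T -> \bar R) -> (T -> \bar R)) :=
  [/\ D (fun=> 0),
      (forall X, D X -> measurable_fun setT X),
      (forall X Y, D X -> aeeq X Y -> D Y),
      (forall X Y, D X -> D Y -> aeeq X Y -> aeeq (I X) (I Y)) &
      [/\ (forall X, D X -> Hmeas Hs (I X)),
          (forall X S, D X -> is_cessinf Hs X S -> aele S (I X)),
          (forall X S, D X -> is_cesssup Hs X S -> aele (I X) S) &
          (forall X Z, D X -> Hmeas Hs Z -> D (fun w => eaddp (X w) (Z w)))]].

Definition decomposable (Hs : set (set T)) (D : set (T -> \bar R)) :=
  forall X Y H, D X -> D Y -> Hs H -> D (hpatch X Y H).

Definition regular (Hs : set (set T)) (D : set (T -> \bar R))
    (I : (T -> \bar R) -> (T -> \bar R)) :=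
  decomposable Hs D /\
  forall X Y H, D X -> D Y -> Hs H ->
    aeeq (indm X H) (indm Y H) -> aeeq (indm (I X) H) (indm (I Y) H).

End CondIndicator.

From HB Require Import structures.
From mathcomp Require Import all_boot all_order all_algebra.
From mathcomp Require Import all_classical all_reals all_analysis measurable_realfun.
Local Open Scope classical_set_scope.
Import Order.TTheory GRing.Theory Num.Theory.
Local Open Scope ring_scope.

(* Every condition is checked separately on H and on its complement: an
   a.s. identity holds iff it holds after multiplication by 1_H and by
   1_(Omega \ H).  On H, locality (1) says I only sees X 1_H; on the
   complement it only sees 0, and I 0 = 0 a.s. because the constant 0 is its
   own conditional essential infimum and supremum. *)

Section Patching.
Context {d : measure_display} {T : measurableType d} {R : realType}.
Local Open Scope ereal_scope.
Implicit Types (X Y : T -> \bar R) (H : set T).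

Lemma indmT X H w : H w -> indm X H w = X w.
Proof. by move=> Hw; rewrite /indm indicE mem_set // mule1. Qed.

Lemma indmN X H w : ~ H w -> indm X H w = 0.
Proof. by move=> Hw; rewrite /indm indicE memNset // mule0. Qed.

Lemma hpatchT X Y H w : H w -> hpatch X Y H w = X w.
Proof.
move=> Hw; rewrite /hpatch !indicE mem_set // memNset; last by [].
by rewrite mule1 mule0; case: (X w) => [r| |] //=; rewrite adde0.
Qed.

Lemma hpatchN X Y H w : ~ H w -> hpatch X Y H w = Y w.
Proof.
move=> Hw; rewrite /hpatch !indicE memNset // mem_set; last by [].
by rewrite mule1 mule0; case: (Y w) => [r| |] //=; rewrite add0e.
Qed.

Lemma indm_cst0 H : indm (cst 0 : T -> \bar R) H = cst 0.
Proof. by apply/funext => w; rewrite /indm /= mul0e. Qed.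

Lemma hpatch0 X H : hpatch X (cst 0) H = indm X H.
Proof.
apply/funext => w; have [Hw|Hw] := pselect (H w).
  by rewrite hpatchT // indmT.
by rewrite hpatchN // indmN.
Qed.

Lemma indm_id X H : indm (indm X H) H = indm X H.
Proof.
apply/funext => w; have [Hw|Hw] := pselect (H w).
  by rewrite !indmT.
by rewrite !indmN.
Qed.

Lemma indm_indmC X H : indm (indm X H) (~` H) = cst 0.
Proof.
apply/funext => w; have [Hw|Hw] := pselect (H w).
  by rewrite indmN.
by rewrite indmT // indmN.
Qed.

Lemma indm_hpatchl X Y H : indm (hpatch X Y H) H = indm X H.
Proof.
apply/funext => w; have [Hw|Hw] := pselect (H w).
  by rewrite !indmT // hpatchT.
by rewrite !indmN.
Qed.

Lemma indm_hpatchr X Y H : indm (hpatch X Y H) (~` H) = indm Y (~` H).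
Proof.
apply/funext => w; have [Hw|Hw] := pselect (H w).
  by rewrite !indmN.
by rewrite !indmT // hpatchN.
Qed.

Context {P : probability T R}.

Lemma aeeq_sym {X Y} : aeeq P X Y -> aeeq P Y X.
Proof. by apply: filterS => w. Qed.

Lemma aeeq_trans {X Y Z} : aeeq P X Y -> aeeq P Y Z -> aeeq P X Z.
Proof. by apply: filterS2 => w ->. Qed.

Lemma aeeq_indm X Y H : aeeq P X Y -> aeeq P (indm X H) (indm Y H).
Proof. by apply: filterS => w XY; rewrite /indm XY. Qed.

Lemma aeeq_hpatchr X Y Y' H :
  aeeq P Y Y' -> aeeq P (hpatch X Y H) (hpatch X Y' H).
Proof.
apply: filterS => w YY'; have [Hw|Hw] := pselect (H w).
  by rewrite !hpatchT.
by rewrite !hpatchN.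
Qed.

Lemma aeeq_indm_setC X Y H :
  aeeq P (indm X H) (indm Y H) -> aeeq P (indm X (~` H)) (indm Y (~` H)) ->
  aeeq P X Y.
Proof.
apply: filterS2 => w eqH eqHC; have [Hw|Hw] := pselect (H w).
  by rewrite -(indmT X _ _ Hw) eqH indmT.
by rewrite -(indmT X (~` H) _ Hw) eqHC indmT.
Qed.

End Patching.

Section ConditionalIndicator.
Context {d : measure_display} {T : measurableType d} {R : realType}.
Local Open Scope ereal_scope.
Implicit Types (X Y : T -> \bar R) (H : set T).

Context {P : probability T R} {Hs : set (set T)} {D : set (T -> \bar R)}.
Context {I : (T -> \bar R) -> (T -> \bar R)}.
Hypothesis Hs_sigma : sigma_algebra setT Hs.
Hypothesis I_cond : cond_indicator P Hs D I.
Hypothesis D_dec : decomposable Hs D.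

Lemma sub_sigma_setC H : Hs H -> Hs (~` H).
Proof. by have [_ HsD _] := Hs_sigma; move/HsD; rewrite setTD. Qed.

Lemma Hmeas_cst (c : \bar R) : Hmeas Hs (cst c).
Proof.
have [Hs0 HsD _] := Hs_sigma.
have HsT : Hs setT by have := HsD _ Hs0; rewrite setD0.
by move=> B _; rewrite preimage_cst; case: ifP.
Qed.

Lemma is_cesssup_cst (c : \bar R) : is_cesssup P Hs (cst c) (cst c).
Proof. by split=> [|//|Z _ //]; [exact: Hmeas_cst | exact: aeW]. Qed.

Lemma is_cessinf_cst (c : \bar R) : is_cessinf P Hs (cst c) (cst c).
Proof. exact: is_cesssup_cst (- c). Qed.

Lemma cond_indicator_cst (c : \bar R) : D (cst c) -> aeeq P (I (cst c)) (cst c).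
Proof.
move=> Dc; have [_ _ _ _ [_ Iinf Isup _]] := I_cond.
have le_c := Isup _ _ Dc (is_cesssup_cst c).
have ge_c := Iinf _ _ Dc (is_cessinf_cst c).
by apply: filterS2 le_c ge_c => w /= ? ?; apply/le_anti/andP.
Qed.

Lemma cond_indicator0 : aeeq P (I (cst 0)) (cst 0).
Proof. by have [D0 _ _ _ _] := I_cond; apply: cond_indicator_cst. Qed.

Lemma D_indm X H : D X -> Hs H -> D (indm X H).
Proof.
have [D0 _ _ _ _] := I_cond.
by move=> DX HH; rewrite -hpatch0; apply: D_dec.
Qed.

Lemma regular_indm : regular P Hs D I ->
  forall X H, D X -> Hs H -> aeeq P (I (indm X H)) (indm (I X) H).
Proof.
move=> [_ local] X H DX HH; have [D0 _ _ _ _] := I_cond.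
have DXH := D_indm _ _ DX HH; have HHC := sub_sigma_setC _ HH.
apply: (aeeq_indm_setC _ _ H); rewrite ?indm_id ?indm_indmC.
  by apply: local => //; rewrite indm_id; apply: aeW.
have I0_HC := aeeq_indm _ _ (~` H) cond_indicator0; rewrite indm_cst0 in I0_HC.
apply: aeeq_trans _ I0_HC.
by apply: local => //; rewrite indm_indmC indm_cst0; apply: aeW.
Qed.

Lemma indm_regular :
  (forall X H, D X -> Hs H -> aeeq P (I (indm X H)) (indm (I X) H)) ->
  regular P Hs D I.
Proof.
move=> I_indm; split=> // X Y H DX DY HH XY; have [_ _ _ I_ae _] := I_cond.
apply: aeeq_trans (aeeq_sym (I_indm _ _ DX HH)) _.
apply: aeeq_trans (I_indm _ _ DY HH).
exact: I_ae (D_indm _ _ DX HH) (D_indm _ _ DY HH) XY.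
Qed.

Lemma indm_hpatch :
  (forall X H, D X -> Hs H -> aeeq P (I (indm X H)) (indm (I X) H)) ->
  forall X Y H, D X -> D Y -> Hs H ->
    aeeq P (I (hpatch X Y H)) (hpatch (I X) (I Y) H).
Proof.
move=> I_indm X Y H DX DY HH; have HHC := sub_sigma_setC _ HH.
have DXYH := D_dec _ _ _ DX DY HH.
apply: (aeeq_indm_setC _ _ H); rewrite ?indm_hpatchl ?indm_hpatchr.
  apply: aeeq_trans (aeeq_sym (I_indm _ _ DXYH HH)) _.
  by rewrite indm_hpatchl; apply: I_indm.
apply: aeeq_trans (aeeq_sym (I_indm _ _ DXYH HHC)) _.
by rewrite indm_hpatchr; apply: I_indm.
Qed.

Lemma hpatch_indm :
  (forall X Y H, D X -> D Y -> Hs H ->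
     aeeq P (I (hpatch X Y H)) (hpatch (I X) (I Y) H)) ->
  forall X H, D X -> Hs H -> aeeq P (I (indm X H)) (indm (I X) H).
Proof.
move=> I_hpatch X H DX HH; have [D0 _ _ _ _] := I_cond.
rewrite -hpatch0 -(hpatch0 (I X)).
exact: aeeq_trans (I_hpatch _ _ _ DX D0 HH) (aeeq_hpatchr _ _ _ _ cond_indicator0).
Qed.

End ConditionalIndicator.

Theorem mainTheorem15 (d : measure_display) (T : measurableType d)
  (R : realType) (P : probability T R) (Hs : set (set T))
  (D : set (T -> \bar R)) (I : (T -> \bar R) -> (T -> \bar R)) :
  P_complete P -> complete_sub_sigma P Hs ->
  cond_indicator P Hs D I -> decomposable Hs D ->
  (regular P Hs D I <->
     (forall X H, D X -> Hs H -> aeeq P (I (indm X H)) (indm (I X) H))) /\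
  ((forall X H, D X -> Hs H -> aeeq P (I (indm X H)) (indm (I X) H)) <->
     (forall X Y H, D X -> D Y -> Hs H ->
        aeeq P (I (hpatch X Y H)) (hpatch (I X) (I Y) H))).
Proof.
move=> _ [Hs_sigma _ _] I_cond D_dec.
split; split.
- exact: regular_indm Hs_sigma I_cond D_dec.
- exact: indm_regular I_cond D_dec.
- exact: indm_hpatch Hs_sigma D_dec.
- exact: hpatch_indm Hs_sigma I_cond.
Qed.
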